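(* Let $G$ be a Polish group, $X$ a Polish space with a continuous $G$-action, and $C\subseteq X$ a Borel $G$-lg comeager set. Then $E^C_G\sim_B E^X_G$.
   Context: $E^X_G=\{(x,y):\exists g\in G\ g\cdot x=y\}$ and for $A\subseteq X$, $E^A_G=E^X_G\cap(A\times A)$ (regarded as an equivalence relation on the standard Borel space $A$ when $A$ is Borel). For $x\in X$ and $A\subseteq X$, $G(x,A)=\{g\in G:g\cdot x\in A\}$. A set $C\subseteq X$ is $G$-lg (locally globally) comeager if $G\setminus G(x,C)$ is meager in $G$ for every $x\in X$. $E\sim_B F$ means there are Borel reductions in both directions, where a Borel reduction of $E$ to $F$ is a Borel map $\psi$ with $(x,y)\in E\iff(\psi(x),\psi(y))\in F$. *)

From Stdlib Require Import Reals.
Open Scope R_scope.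

Definition is_metric {X : Type} (d : X -> X -> R) : Prop :=
  (forall x y, 0 <= d x y) /\
  (forall x y, d x y = 0 <-> x = y) /\
  (forall x y, d x y = d y x) /\
  (forall x y z, d x z <= d x y + d y z).

Definition cauchy_seq {X : Type} (d : X -> X -> R) (u : nat -> X) : Prop :=
  forall eps, 0 < eps -> exists N, forall n m, (N <= n)%nat -> (N <= m)%nat ->
    d (u n) (u m) < eps.

Definition converges_to {X : Type} (d : X -> X -> R) (u : nat -> X) (l : X) : Prop :=
  forall eps, 0 < eps -> exists N, forall n, (N <= n)%nat -> d (u n) l < eps.

Definition complete_metric {X : Type} (d : X -> X -> R) : Prop :=
  forall u, cauchy_seq d u -> exists l, converges_to d u l.

(* countable dense subset (enumerated with possible gaps, so that the
   empty space is allowed) *)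
Definition separable_metric {X : Type} (d : X -> X -> R) : Prop :=
  exists D : nat -> option X, forall x eps, 0 < eps ->
    exists n y, D n = Some y /\ d x y < eps.

Definition polish_metric {X : Type} (d : X -> X -> R) : Prop :=
  is_metric d /\ complete_metric d /\ separable_metric d.

Definition is_open {X : Type} (d : X -> X -> R) (U : X -> Prop) : Prop :=
  forall x, U x -> exists eps, 0 < eps /\ forall y, d x y < eps -> U y.

Definition closure {X : Type} (d : X -> X -> R) (A : X -> Prop) : X -> Prop :=
  fun x => forall U, is_open d U -> U x -> exists y, U y /\ A y.

Definition nowhere_dense {X : Type} (d : X -> X -> R) (A : X -> Prop) : Prop :=
  forall U, is_open d U -> (forall x, U x -> closure d A x) -> forall x, ~ U x.

Definition meager {X : Type} (d : X -> X -> R) (A : X -> Prop) : Prop :=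
  exists N : nat -> X -> Prop, (forall n, nowhere_dense d (N n)) /\
    forall x, A x -> exists n, N n x.

Definition sigma_algebra {X : Type} (S : (X -> Prop) -> Prop) : Prop :=
  (forall A, S A -> S (fun x => ~ A x)) /\
  (forall A : nat -> X -> Prop, (forall n, S (A n)) -> S (fun x => exists n, A n x)).

Definition borel {X : Type} (d : X -> X -> R) (A : X -> Prop) : Prop :=
  forall S : (X -> Prop) -> Prop, sigma_algebra S ->
    (forall U, is_open d U -> S U) -> S A.

Definition sub_borel {X : Type} (d : X -> X -> R) (C : X -> Prop)
  (B : {x : X | C x} -> Prop) : Prop :=
  exists A, borel d A /\ forall c, B c <-> A (proj1_sig c).

Definition measurable {A B : Type} (SA : (A -> Prop) -> Prop)
  (SB : (B -> Prop) -> Prop) (f : A -> B) : Prop :=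
  forall V, SB V -> SA (fun a => V (f a)).

Definition borel_reduction {A B : Type} (SA : (A -> Prop) -> Prop)
  (SB : (B -> Prop) -> Prop) (E : A -> A -> Prop) (F : B -> B -> Prop)
  (f : A -> B) : Prop :=
  measurable SA SB f /\ forall x y, E x y <-> F (f x) (f y).

Definition borel_reducible {A B : Type} (SA : (A -> Prop) -> Prop)
  (SB : (B -> Prop) -> Prop) (E : A -> A -> Prop) (F : B -> B -> Prop) : Prop :=
  exists f : A -> B, borel_reduction SA SB E F f.

Definition borel_bireducible {A B : Type} (SA : (A -> Prop) -> Prop)
  (SB : (B -> Prop) -> Prop) (E : A -> A -> Prop) (F : B -> B -> Prop) : Prop :=
  borel_reducible SA SB E F /\ borel_reducible SB SA F E.

Definition is_group {G : Type} (mul : G -> G -> G) (inv : G -> G) (e : G) : Prop :=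
  (forall a b c, mul a (mul b c) = mul (mul a b) c) /\
  (forall a, mul e a = a /\ mul a e = a) /\
  (forall a, mul (inv a) a = e /\ mul a (inv a) = e).

Definition continuous1 {A B : Type} (dA : A -> A -> R) (dB : B -> B -> R)
  (f : A -> B) : Prop :=
  forall a eps, 0 < eps -> exists delta, 0 < delta /\
    forall a', dA a a' < delta -> dB (f a) (f a') < eps.

Definition continuous2 {A B C : Type} (dA : A -> A -> R) (dB : B -> B -> R)
  (dC : C -> C -> R) (f : A -> B -> C) : Prop :=
  forall a b eps, 0 < eps -> exists delta, 0 < delta /\
    forall a' b', dA a a' < delta -> dB b b' < delta ->
      dC (f a b) (f a' b') < eps.

Definition polish_group {G : Type} (dG : G -> G -> R) (mul : G -> G -> G)
  (inv : G -> G) (e : G) : Prop :=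
  polish_metric dG /\ is_group mul inv e /\
  continuous2 dG dG dG mul /\ continuous1 dG dG inv.

Definition continuous_action {G X : Type} (dG : G -> G -> R) (mul : G -> G -> G)
  (e : G) (dX : X -> X -> R) (act : G -> X -> X) : Prop :=
  (forall x, act e x = x) /\
  (forall g h x, act (mul g h) x = act g (act h x)) /\
  continuous2 dG dX dX act.

Definition orbit_rel {G X : Type} (act : G -> X -> X) (x y : X) : Prop :=
  exists g, act g x = y.

Definition orbit_rel_on {G X : Type} (act : G -> X -> X) (C : X -> Prop)
  (a b : {x : X | C x}) : Prop :=
  orbit_rel act (proj1_sig a) (proj1_sig b).

Definition return_set {G X : Type} (act : G -> X -> X) (x : X) (A : X -> Prop) : G -> Prop :=
  fun g => A (act g x).

Definition lg_comeager {G X : Type} (dG : G -> G -> R) (act : G -> X -> X)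
  (C : X -> Prop) : Prop :=
  forall x, meager dG (fun g => ~ return_set act x C g).

(* Every Borel set A ⊆ X is "uniformly Baire" (a σ-algebra induction): the set
   {(x, g) | g·x ∈ A} agrees, on a countable intersection of sets with dense open
   sections, with a countable union of rectangles B × V (B Borel, V open). For A = C,
   lg-comeagerness and the Baire category theorem make every section of that union
   nonempty; a shrinking sequence of basic balls inside it, chosen at each stage with
   least index, converges to some s(x) with s(x)·x ∈ C, and the least-index choice
   makes x ↦ s(x)·x Borel. This map reduces E^X_G to E^C_G; inclusion gives the other
   reduction. *)

From Stdlib Require Import Reals Lra Lia Classical ClassicalEpsilon
  FunctionalExtensionality PropExtensionality Cantor Wf_nat.
Open Scope R_scope.

Definition dense_enum {T : Type} (d : T -> T -> R) (D : nat -> option T) : Prop :=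
  forall x eps, 0 < eps -> exists n y, D n = Some y /\ d x y < eps.

Lemma open_const {T : Type} (d : T -> T -> R) (Q : Prop) : is_open d (fun _ => Q).
Proof. intros x q; exists 1; split; [lra | auto]. Qed.

Section Borel.
Context {X : Type} (d : X -> X -> R).

Lemma borel_ext (A B : X -> Prop) : (forall x, A x <-> B x) -> borel d A -> borel d B.
Proof.
  intros HAB HA; replace B with A; [exact HA |].
  apply functional_extensionality; intro x; apply propositional_extensionality; auto.
Qed.

Lemma borel_open (U : X -> Prop) : is_open d U -> borel d U.
Proof. intros HU S _ HS; auto. Qed.

Lemma borel_const (Q : Prop) : borel d (fun _ => Q).
Proof. apply borel_open, open_const. Qed.

Lemma borel_compl (A : X -> Prop) : borel d A -> borel d (fun x => ~ A x).
Proof. intros HA S [HSc HSu] HSo; apply HSc, HA; [split |]; auto. Qed.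

Lemma borel_union (A : nat -> X -> Prop) :
  (forall n, borel d (A n)) -> borel d (fun x => exists n, A n x).
Proof. intros HA S [HSc HSu] HSo; apply HSu; intro n; apply HA; [split |]; auto. Qed.

Lemma borel_inter (A : nat -> X -> Prop) :
  (forall n, borel d (A n)) -> borel d (fun x => forall n, A n x).
Proof.
  intros HA; apply (borel_ext (fun x => ~ exists n, ~ A n x)).
  - intro x; split; [intros H n; apply NNPP; eauto | intros H [n Hn]; auto].
  - apply borel_compl, borel_union; intro n; apply borel_compl; auto.
Qed.

Lemma borel_or (A B : X -> Prop) :
  borel d A -> borel d B -> borel d (fun x => A x \/ B x).
Proof.
  intros HA HB; apply (borel_ext (fun x => exists n, (match n with 0%nat => A | _ => B end) x)).
  - intro x; split; [intros [[|n] H]; auto | intros [H | H]; [exists 0%nat | exists 1%nat]; auto].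
  - apply borel_union; intros [|n]; auto.
Qed.

Lemma borel_and (A B : X -> Prop) :
  borel d A -> borel d B -> borel d (fun x => A x /\ B x).
Proof.
  intros HA HB; apply (borel_ext (fun x => ~ (~ A x \/ ~ B x))); [intro x; tauto |].
  apply borel_compl, borel_or; apply borel_compl; auto.
Qed.

Lemma borel_preimage {Y : Type} (dY : Y -> Y -> R) (h : X -> Y) :
  (forall U, is_open dY U -> borel d (fun x => U (h x))) ->
  forall B, borel dY B -> borel d (fun x => B (h x)).
Proof.
  intros Hopen B HB; apply (HB (fun V => borel d (fun x => V (h x)))); auto; split.
  - intros A; apply borel_compl.
  - intros A; apply (borel_union (fun n x => A n (h x))).
Qed.

End Borel.

Section Metric.
Context {T : Type} (d : T -> T -> R).

Lemma open_and U V : is_open d U -> is_open d V -> is_open d (fun x => U x /\ V x).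
Proof.
  intros HU HV x [Ux Vx].
  destruct (HU x Ux) as [e1 [He1 H1]], (HV x Vx) as [e2 [He2 H2]].
  exists (Rmin e1 e2); split; [apply Rmin_pos; auto |].
  intros y Hy; pose proof (Rmin_l e1 e2); pose proof (Rmin_r e1 e2).
  split; [apply H1 | apply H2]; lra.
Qed.

Lemma nowhere_dense_avoid N U u :
  nowhere_dense d N -> is_open d U -> U u ->
  exists V g, is_open d V /\ V g /\ (forall y, V y -> U y) /\ (forall y, V y -> ~ N y).
Proof.
  intros HN HU Uu.
  assert (exists g, U g /\ ~ closure d N g) as [g [Ug Hg]].
  { apply NNPP; intro H; apply (HN U HU) with u; auto.
    intros x Ux; apply NNPP; intro Hx; apply H; eauto. }
  apply not_all_ex_not in Hg as [V HV].
  apply imply_to_and in HV as [HVo HV]; apply imply_to_and in HV as [Vg HV].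
  exists (fun y => V y /\ U y), g; repeat split; auto using open_and; try tauto.
  intros y [Vy _] Ny; apply HV; eauto.
Qed.

Hypothesis Hm : is_metric d.

Lemma dist_refl x : d x x = 0.
Proof. apply (proj1 (proj2 Hm)); reflexivity. Qed.

Lemma dist_sym x y : d x y = d y x.
Proof. apply Hm. Qed.

Lemma dist_triangle x y z : d x z <= d x y + d y z.
Proof. apply Hm. Qed.

Lemma open_ball c r : is_open d (fun y => d c y < r).
Proof.
  intros x Hx; exists (r - d c x); split; [lra |].
  intros y Hy; pose proof (dist_triangle c x y); lra.
Qed.

End Metric.

Lemma inv_INR_S_pos m : 0 < / INR (S m).
Proof. apply Rinv_0_lt_compat, lt_0_INR; lia. Qed.

Lemma exists_inv_INR_S_lt eps : 0 < eps -> exists m, / INR (S m) < eps.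
Proof.
  intros He; destruct (archimed_cor1 eps He) as [[|m] [Hm Hm0]]; [lia | eauto].
Qed.

Section Meager.
Context {T : Type} (d : T -> T -> R).

Lemma nowhere_dense_meager N : nowhere_dense d N -> meager d N.
Proof. intros HN; exists (fun _ => N); split; [auto | intros x Hx; exists 0%nat; exact Hx]. Qed.

Lemma meager_union (A : nat -> T -> Prop) :
  (forall n, meager d (A n)) -> meager d (fun x => exists n, A n x).
Proof.
  intros HA.
  destruct (choice (fun n (N : nat -> T -> Prop) =>
    (forall k, nowhere_dense d (N k)) /\ forall x, A n x -> exists k, N k x)) as [N HN];
    [exact HA |].
  exists (fun m => N (fst (of_nat m)) (snd (of_nat m))); split.
  - intro m; apply HN.
  - intros x [n Hn]; destruct (proj2 (HN n) x Hn) as [k Hk].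
    exists (to_nat (n, k)); rewrite cancel_of_to; exact Hk.
Qed.

End Meager.

(* The least witness of [P], chosen classically; only meaningful when [P] is inhabited. *)
Definition least (P : nat -> Prop) : nat :=
  epsilon (inhabits 0%nat) (fun n => P n /\ forall m, P m -> (n <= m)%nat).

Lemma least_spec P : (exists n, P n) -> P (least P) /\ forall m, P m -> (least P <= m)%nat.
Proof.
  intros HP; unfold least; apply epsilon_spec.
  destruct (dec_inh_nat_subset_has_unique_least_element P (fun n => classic (P n)) HP)
    as [n [Hn _]]; eauto.
Qed.

Lemma least_eq P i :
  (exists n, P n) -> (least P = i <-> P i /\ forall m, (m < i)%nat -> ~ P m).
Proof.
  intros HP; destruct (least_spec P HP) as [H1 H2]; split.
  - intros <-; split; auto; intros m Hm Pm; specialize (H2 m Pm); lia.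
  - intros [Pi Hi]; specialize (H2 i Pi).
    destruct (Nat.eq_dec (least P) i) as [| Hne]; auto.
    exfalso; apply (Hi (least P)); [lia | auto].
Qed.

Lemma borel_least_eq {X : Type} (d : X -> X -> R) (P : X -> nat -> Prop) :
  (forall x, exists n, P x n) -> (forall n, borel d (fun x => P x n)) ->
  forall i, borel d (fun x => least (P x) = i).
Proof.
  intros Hex HP i.
  apply (borel_ext d (fun x => P x i /\ forall m, ~ (m < i)%nat \/ ~ P x m)).
  - intro x; rewrite (least_eq _ i (Hex x)).
    split; intros [Hi Hm]; split; auto; intro m.
    + destruct (Hm m); tauto.
    + destruct (classic (m < i)%nat); [right | left]; auto.
  - apply borel_and; auto; apply borel_inter; intro m.
    apply borel_or; [apply borel_const | apply borel_compl; auto].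
Qed.

Section Basis.
Context {T : Type} (d : T -> T -> R) (t0 : T) (D : nat -> option T).

Definition ball_center (n : nat) : T :=
  match D (fst (of_nat n)) with Some c => c | None => t0 end.

Definition ball_radius (n : nat) : R := / INR (S (snd (of_nat n))).

Definition basic_ball (n : nat) (y : T) : Prop := d (ball_center n) y < ball_radius n.

Definition closed_ball (n : nat) (y : T) : Prop := d (ball_center n) y <= ball_radius n.

Hypothesis Hm : is_metric d.
Hypothesis HD : dense_enum d D.

Lemma ball_radius_pos n : 0 < ball_radius n.
Proof. apply inv_INR_S_pos. Qed.

Lemma basic_ball_open n : is_open d (basic_ball n).
Proof. apply open_ball, Hm. Qed.

Lemma basic_ball_center n : basic_ball n (ball_center n).
Proof. unfold basic_ball; rewrite (dist_refl d Hm); apply ball_radius_pos. Qed.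

Lemma closed_ball_center n : closed_ball n (ball_center n).
Proof. left; apply basic_ball_center. Qed.

Lemma basic_ball_closed_ball n y : basic_ball n y -> closed_ball n y.
Proof. unfold basic_ball, closed_ball; intros; lra. Qed.

Lemma closed_ball_dist n y z :
  closed_ball n y -> closed_ball n z -> d y z <= 2 * ball_radius n.
Proof.
  unfold closed_ball; intros Hy Hz.
  pose proof (dist_triangle d Hm y (ball_center n) z).
  rewrite (dist_sym d Hm y (ball_center n)) in H; lra.
Qed.

Lemma basis_small g delta rho :
  0 < delta -> 0 < rho ->
  exists n, ball_radius n <= rho /\ basic_ball n g /\
    forall y, closed_ball n y -> d g y < delta.
Proof.
  intros Hdelta Hrho.
  destruct (exists_inv_INR_S_lt (Rmin (delta / 2) rho)) as [m Hmr];
    [apply Rmin_pos; lra |].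
  pose proof (Rmin_l (delta / 2) rho); pose proof (Rmin_r (delta / 2) rho).
  destruct (HD g (/ INR (S m)) (inv_INR_S_pos m)) as [a [c [Ha Hc]]].
  exists (to_nat (a, m)).
  unfold basic_ball, closed_ball, ball_center, ball_radius; rewrite cancel_of_to; cbn [fst snd].
  rewrite Ha.
  repeat split; [lra | rewrite (dist_sym d Hm); exact Hc |].
  intros y Hy; pose proof (dist_triangle d Hm g c y); lra.
Qed.

Lemma closed_ball_in_open U g rho :
  is_open d U -> U g -> 0 < rho ->
  exists n, ball_radius n <= rho /\ forall y, closed_ball n y -> U y.
Proof.
  intros HU Ug Hrho; destruct (HU g Ug) as [eps [Heps HUg]].
  destruct (basis_small g eps rho Heps Hrho) as [n [Hn [_ Hin]]]; eauto.
Qed.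

End Basis.

Section NestedBalls.
Context {T : Type} (d : T -> T -> R) (t0 : T) (D : nat -> option T).
Local Notation cball := (closed_ball d t0 D).

(* [Req k i] is the [k]-th requirement on the [k]-th ball of a shrinking nested
   sequence; the sequence picks at each stage the least admissible ball index,
   which keeps it Borel in any parameter [Req] depends on. *)
Definition initial_ball (Req : nat -> nat -> Prop) (i : nat) : Prop :=
  ball_radius i <= / INR 1 /\ Req 0%nat i.

Definition refining_ball (Req : nat -> nat -> Prop) (k i i' : nat) : Prop :=
  ball_radius i' <= / INR (S (S k)) /\ (forall y, cball i' y -> cball i y) /\ Req (S k) i'.

Fixpoint nested_index (Req : nat -> nat -> Prop) (k : nat) : nat :=
  match k with
  | 0%nat => least (initial_ball Req)
  | S k => least (refining_ball Req k (nested_index Req k))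
  end.

Definition attainable (Req : nat -> nat -> Prop) : Prop :=
  (exists i, initial_ball Req i) /\ forall k i, exists i', refining_ball Req k i i'.

Hypothesis Hm : is_metric d.
Hypothesis Hc : complete_metric d.
Hypothesis HD : dense_enum d D.

Lemma nested_index_spec Req :
  attainable Req ->
  initial_ball Req (nested_index Req 0) /\
  forall k, refining_ball Req k (nested_index Req k) (nested_index Req (S k)).
Proof.
  intros [H0 HS]; split; [apply (least_spec _ H0) |].
  intro k; apply (least_spec _ (HS k _)).
Qed.

Lemma nested_index_radius Req :
  attainable Req -> forall k, ball_radius (nested_index Req k) <= / INR (S k).
Proof.
  intros Hatt [|k]; destruct (nested_index_spec Req Hatt) as [H0 HS];
    [apply H0 | apply (HS k)].
Qed.

Lemma nested_index_req Req : attainable Req -> forall k, Req k (nested_index Req k).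
Proof.
  intros Hatt [|k]; destruct (nested_index_spec Req Hatt) as [H0 HS];
    [apply H0 | apply (HS k)].
Qed.

Lemma closed_balls_nested_meet (i : nat -> nat) :
  (forall k, ball_radius (i k) <= / INR (S k)) ->
  (forall k y, cball (i (S k)) y -> cball (i k) y) ->
  exists g, forall k, cball (i k) g.
Proof.
  intros Hr Hnest.
  set (c := fun k => ball_center t0 D (i k)).
  assert (Hchain : forall k p y, cball (i (k + p)%nat) y -> cball (i k) y).
  { intros k p; induction p as [|p IH]; intros y Hy.
    - rewrite Nat.add_0_r in Hy; exact Hy.
    - apply IH, Hnest; rewrite <- Nat.add_succ_r; exact Hy. }
  assert (Hin : forall k m, (k <= m)%nat -> d (c k) (c m) <= ball_radius (i k)).
  { intros k m Hkm; replace m with (k + (m - k))%nat by lia.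
    apply (Hchain k (m - k)%nat), closed_ball_center, Hm. }
  destruct (Hc c) as [g Hg].
  { intros eps Heps; destruct (exists_inv_INR_S_lt (eps / 2)) as [N HN]; [lra |].
    exists N; intros n m Hn Hm'.
    pose proof (Hin N n Hn); pose proof (Hin N m Hm'); pose proof (Hr N).
    pose proof (dist_triangle d Hm (c n) (c N) (c m)).
    rewrite (dist_sym d Hm (c n) (c N)) in H2; lra. }
  exists g; intro k; unfold closed_ball.
  destruct (Rle_lt_dec (d (c k) g) (ball_radius (i k))) as [| Hlt]; [assumption | exfalso].
  destruct (Hg (d (c k) g - ball_radius (i k))) as [N HN]; [lra |].
  specialize (HN (k + N)%nat ltac:(lia)).
  pose proof (Hin k (k + N)%nat ltac:(lia)).
  pose proof (dist_triangle d Hm (c k) (c (k + N)%nat) g); lra.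
Qed.

Lemma nested_balls_meet Req :
  attainable Req -> exists g, forall k, cball (nested_index Req k) g.
Proof.
  intros Hatt; apply closed_balls_nested_meet; [apply nested_index_radius, Hatt |].
  intros k; apply (nested_index_spec Req Hatt).
Qed.

Lemma attainable_of_open (Req : nat -> nat -> Prop) :
  (exists V g, is_open d V /\ V g /\
     forall i, (forall y, cball i y -> V y) -> Req 0%nat i) ->
  (forall k U u, is_open d U -> U u -> exists V g, is_open d V /\ V g /\
     (forall y, V y -> U y) /\ forall i, (forall y, cball i y -> V y) -> Req (S k) i) ->
  attainable Req.
Proof.
  intros [V [g [HV [Vg HReq]]]] Hstep; split.
  - destruct (closed_ball_in_open d t0 D Hm HD V g (/ INR 1)) as [i [Hi HiV]];
      auto using inv_INR_S_pos.
    exists i; split; auto.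
  - intros k i.
    destruct (Hstep k (basic_ball d t0 D i) (ball_center t0 D i)) as
      [V' [g' [HV' [Vg' [HV'i HReq']]]]];
      [apply basic_ball_open, Hm | apply basic_ball_center, Hm |].
    destruct (closed_ball_in_open d t0 D Hm HD V' g' (/ INR (S (S k)))) as [i' [Hi' Hi'V]];
      auto using inv_INR_S_pos.
    exists i'; repeat split; auto.
    intros y Hy; apply basic_ball_closed_ball, HV'i, Hi'V, Hy.
Qed.

Lemma borel_nested_index {X : Type} (dX : X -> X -> R) (Req : X -> nat -> nat -> Prop) :
  (forall x, attainable (Req x)) -> (forall k i, borel dX (fun x => Req x k i)) ->
  forall k i, borel dX (fun x => nested_index (Req x) k = i).
Proof.
  intros Hatt HReq; induction k as [|k IH]; intro i.
  - apply (borel_least_eq dX (fun x => initial_ball (Req x))); [apply Hatt |].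
    intro n; apply borel_and; auto using borel_const.
  - apply (borel_ext dX (fun x => exists i0,
      nested_index (Req x) k = i0 /\ least (refining_ball (Req x) k i0) = i)).
    + intro x; simpl; split; [intros [i0 [<- H]]; exact H | eauto].
    + apply borel_union; intro i0; apply borel_and; [apply IH |].
      apply (borel_least_eq dX (fun x => refining_ball (Req x) k i0));
        [intro x; apply (Hatt x) |].
      intro n; repeat apply borel_and; auto using borel_const.
Qed.

End NestedBalls.

Theorem baire_category {T : Type} (d : T -> T -> R) (t0 : T) :
  polish_metric d -> forall A, meager d A -> exists g, ~ A g.
Proof.
  intros [Hm [Hc [D HD]]] A [N [HN HA]].
  set (Req := fun k i => forall y, closed_ball d t0 D i y -> ~ N k y).
  assert (Hatt : attainable d t0 D Req).
  { apply (attainable_of_open d t0 D Hm HD).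
    - destruct (nowhere_dense_avoid d (N 0%nat) (fun _ => True) t0 (HN 0%nat))
        as [V [g [HV [Vg [_ HVN]]]]]; auto using open_const.
      exists V, g; repeat split; auto; intros i Hi y Hy; apply HVN, Hi, Hy.
    - intros k U u HU Uu.
      destruct (nowhere_dense_avoid d (N (S k)) U u (HN _) HU Uu)
        as [V [g [HV [Vg [HVU HVN]]]]].
      exists V, g; repeat split; auto; intros i Hi y Hy; apply HVN, Hi, Hy. }
  destruct (nested_balls_meet d t0 D Hm Hc Req Hatt) as [g Hg].
  exists g; intro Ag; destruct (HA g Ag) as [k Hk].
  exact (nested_index_req d t0 D Req Hatt k g (Hg k) Hk).
Qed.

Section UniformBaire.
Context {G X : Type} (dG : G -> G -> R) (dX : X -> X -> R) (act : G -> X -> X).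
Context (t0 : G) (DG : nat -> option G).
Local Notation ball := (basic_ball dG t0 DG).
Local Notation cball := (closed_ball dG t0 DG).

Definition rect_open (O : X -> G -> Prop) : Prop :=
  exists (B : nat -> X -> Prop) (V : nat -> G -> Prop),
    (forall j, borel dX (B j)) /\ (forall j, is_open dG (V j)) /\
    forall x g, O x g <-> exists j, B j x /\ V j g.

Definition dense_sections (W : X -> G -> Prop) : Prop :=
  forall x U, is_open dG U -> (exists g, U g) -> exists g, U g /\ W x g.

(* The Baire property of [{(x, g) | g x \in A}], uniformly in the sections. *)
Definition uniformly_baire (A : X -> Prop) : Prop :=
  exists O, rect_open O /\ exists W : nat -> X -> G -> Prop,
    (forall k, rect_open (W k) /\ dense_sections (W k)) /\
    forall x g, (forall k, W k x g) -> (A (act g x) <-> O x g).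

Definition uniformly_inside (K : G -> Prop) (r : R) (U : X -> Prop) (x : X) : Prop :=
  forall h, K h -> forall w, dX (act h x) w < r -> U w.

Lemma rect_open_pairs (B : nat -> nat -> X -> Prop) (V : nat -> nat -> G -> Prop) O :
  (forall n m, borel dX (B n m)) -> (forall n m, is_open dG (V n m)) ->
  (forall x g, O x g <-> exists n m, B n m x /\ V n m g) -> rect_open O.
Proof.
  intros HB HV HO.
  exists (fun j => B (fst (of_nat j)) (snd (of_nat j))),
    (fun j => V (fst (of_nat j)) (snd (of_nat j))).
  repeat split; auto; intros HOxg.
  - apply HO in HOxg as [n [m Hnm]]; exists (to_nat (n, m)); rewrite cancel_of_to; exact Hnm.
  - apply HO; destruct HOxg as [j Hj]; eauto.
Qed.

Lemma rect_open_union (O : nat -> X -> G -> Prop) :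
  (forall n, rect_open (O n)) -> rect_open (fun x g => exists n, O n x g).
Proof.
  intros HO.
  destruct (choice (fun n (p : (nat -> X -> Prop) * (nat -> G -> Prop)) =>
    (forall j, borel dX (fst p j)) /\ (forall j, is_open dG (snd p j)) /\
    forall x g, O n x g <-> exists j, fst p j x /\ snd p j g)) as [f Hf].
  { intro n; destruct (HO n) as [B [V HBV]]; exists (B, V); exact HBV. }
  apply (rect_open_pairs (fun n => fst (f n)) (fun n => snd (f n))); try apply Hf.
  intros x g; split; intros [n Hn]; exists n; apply Hf; exact Hn.
Qed.

Lemma rect_open_or O1 O2 :
  rect_open O1 -> rect_open O2 -> rect_open (fun x g => O1 x g \/ O2 x g).
Proof.
  intros H1 H2.
  destruct (rect_open_union (fun n => match n with 0%nat => O1 | _ => O2 end))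
    as [B [V [HB [HV HBV]]]]; [intros [|n]; auto |].
  exists B, V; repeat split; auto; intros HOxg.
  - apply HBV; destruct HOxg; [exists 0%nat | exists 1%nat]; auto.
  - apply HBV in HOxg as [[|n] Hn]; auto.
Qed.

Lemma rect_open_full : rect_open (fun _ _ => True).
Proof.
  exists (fun _ _ => True), (fun _ _ => True).
  split; [intro; apply borel_const | split; [intro; apply open_const |]].
  intros x g; split; [intros _; exists 0%nat |]; auto.
Qed.

Hypothesis HmG : is_metric dG.
Hypothesis HmX : is_metric dX.
Hypothesis HDG : dense_enum dG DG.
Hypothesis Hact : continuous2 dG dX dX act.

Lemma borel_uniformly_inside K r U : borel dX (uniformly_inside K r U).
Proof.
  apply (borel_ext dX (fun x => ~ exists h w, K h /\ dX (act h x) w < r /\ ~ U w)).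
  { intro x; unfold uniformly_inside; split.
    - intros H h Kh w Hw; apply NNPP; intro nU; apply H; eauto.
    - intros H [h [w [Kh [Hw nU]]]]; eauto. }
  apply borel_compl, borel_open; intros x [h [w [Kh [Hw nU]]]].
  destruct (Hact h x (r - dX (act h x) w)) as [delta [Hdelta Hcont]]; [lra |].
  exists delta; split; auto; intros x' Hx'; exists h, w; repeat split; auto.
  assert (Hclose : dX (act h x) (act h x') < r - dX (act h x) w)
    by (apply Hcont; auto; rewrite (dist_refl dG HmG); auto).
  pose proof (dist_triangle dX HmX (act h x') (act h x) w).
  rewrite (dist_sym dX HmX (act h x') (act h x)) in H; lra.
Qed.

Lemma uniformly_inside_near U g x :
  is_open dX U -> U (act g x) -> exists delta m, 0 < delta /\
    forall K, (forall h, K h -> dG g h < delta) -> uniformly_inside K (/ INR (S m)) U x.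
Proof.
  intros HU Ug; destruct (HU _ Ug) as [eps [Heps HUeps]].
  destruct (Hact g x (eps / 2)) as [delta [Hdelta Hcont]]; [lra |].
  destruct (exists_inv_INR_S_lt (eps / 2)) as [m Hm]; [lra |].
  exists delta, m; split; auto; intros K HK h Kh w Hw; apply HUeps.
  assert (Hclose : dX (act g x) (act h x) < eps / 2)
    by (apply Hcont; auto; rewrite (dist_refl dX HmX); auto).
  pose proof (dist_triangle dX HmX (act g x) (act h x) w); lra.
Qed.

Lemma uniformly_baire_open A : is_open dX A -> uniformly_baire A.
Proof.
  intros HA; exists (fun x g => A (act g x)); split.
  - apply (rect_open_pairs (fun n m => uniformly_inside (cball n) (/ INR (S m)) A)
      (fun n _ => ball n)); auto using borel_uniformly_inside, basic_ball_open.
    intros x g; split.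
    + intros Ag; destruct (uniformly_inside_near A g x HA Ag) as [delta [m [Hdelta Hin]]].
      destruct (basis_small dG t0 DG HmG HDG g delta 1) as [n [_ [Hg Hn]]]; [auto | lra |].
      exists n, m; split; auto.
    + intros [n [m [Hin Hg]]].
      apply (Hin g (basic_ball_closed_ball dG t0 DG n g Hg)).
      rewrite (dist_refl dX HmX); apply inv_INR_S_pos.
  - exists (fun _ _ _ => True); split; [| tauto].
    intro k; split; [apply rect_open_full |].
    intros x U _ [g Ug]; eauto.
Qed.

Lemma uniformly_baire_compl A : uniformly_baire A -> uniformly_baire (fun x => ~ A x).
Proof.
  intros [O [[B [V [HB [HV HO]]]] [W [HW HA]]]].
  (* An open set missing the section [O x] contains a basic ball, whose points lie in
     [O' x]; hence [O \/ O'] has dense sections. *)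
  set (B' := fun n x => forall j, B j x -> forall h, V j h -> ~ ball n h).
  set (O' := fun x g => exists n, B' n x /\ ball n g).
  assert (HO' : rect_open O').
  { exists B', ball; repeat split; auto using basic_ball_open.
    intro n; apply (borel_ext dX (fun x => forall j, ~ B j x \/ forall h, V j h -> ~ ball n h)).
    - intro x; unfold B'; split; [intros H j Bj; destruct (H j); tauto |].
      intros H j; destruct (classic (B j x)); [right; apply H | left]; auto.
    - apply borel_inter; intro j; apply borel_or; auto using borel_compl, borel_const. }
  exists O'; split; [exact HO' |].
  exists (fun k => match k with 0%nat => fun x g => O x g \/ O' x g | S k => W k end); split.
  - intros [|k]; [| apply HW]; split.
    + apply rect_open_or; [exists B, V |]; auto.
    + intros x U HU [u Uu].
      destruct (classic (exists g, U g /\ O x g)) as [[g Hg] | Hmiss]; [exists g; tauto |].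
      destruct (HU u Uu) as [eps [Heps HUeps]].
      destruct (basis_small dG t0 DG HmG HDG u eps 1 Heps) as [n [_ [Hu Hn]]]; [lra |].
      exists u; split; [exact Uu | right; exists n; split; [| exact Hu]].
      intros j Bj h Vh Hh; apply Hmiss; exists h; split.
      * apply HUeps, Hn, basic_ball_closed_ball, Hh.
      * apply HO; eauto.
  - intros x g HWg; specialize (HA x g (fun k => HWg (S k))).
    assert (Hdisj : O' x g -> ~ A (act g x)).
    { intros [n [HB' Hg]] Ag; apply HA, HO in Ag as [j [Bj Vj]]; exact (HB' j Bj g Vj Hg). }
    destruct (HWg 0%nat); tauto.
Qed.

Lemma uniformly_baire_union (A : nat -> X -> Prop) :
  (forall n, uniformly_baire (A n)) -> uniformly_baire (fun x => exists n, A n x).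
Proof.
  intros HA.
  destruct (choice (fun n (p : (X -> G -> Prop) * (nat -> X -> G -> Prop)) =>
    rect_open (fst p) /\ (forall k, rect_open (snd p k) /\ dense_sections (snd p k)) /\
    forall x g, (forall k, snd p k x g) -> (A n (act g x) <-> fst p x g))) as [f Hf].
  { intro n; destruct (HA n) as [O [HO [W HW]]]; exists (O, W); auto. }
  exists (fun x g => exists n, fst (f n) x g); split.
  { apply rect_open_union; intro n; apply (Hf n). }
  exists (fun m => snd (f (fst (of_nat m))) (snd (of_nat m))); split; [intro m; apply Hf |].
  intros x g HWg.
  assert (Hn : forall n, A n (act g x) <-> fst (f n) x g).
  { intro n; apply (Hf n); intro k.
    specialize (HWg (to_nat (n, k))); rewrite cancel_of_to in HWg; exact HWg. }
  split; intros [n Hn']; exists n; apply Hn; exact Hn'.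
Qed.

Lemma uniformly_baire_borel A : borel dX A -> uniformly_baire A.
Proof.
  intros HA; apply HA; [split |].
  - apply uniformly_baire_compl.
  - apply uniformly_baire_union.
  - apply uniformly_baire_open.
Qed.

Lemma nowhere_dense_compl_section W x :
  rect_open W -> dense_sections W -> nowhere_dense dG (fun g => ~ W x g).
Proof.
  intros [B [V [HB [HV HW]]]] Hdense U HU Hcl g0 Ug0.
  destruct (Hdense x U HU (ex_intro _ g0 Ug0)) as [g [Ug Wg]].
  apply HW in Wg as [j [Bj Vj]].
  destruct (Hcl g Ug (fun z => U z /\ V j z)) as [z [[Uz Vz] nW]];
    [apply open_and; auto | auto |].
  apply nW, HW; eauto.
Qed.

End UniformBaire.

Section Selector.
Context {G X : Type} (dG : G -> G -> R) (dX : X -> X -> R) (act : G -> X -> X).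
Context (t0 : G) (DG : nat -> option G).
Local Notation cball := (closed_ball dG t0 DG).
Hypothesis HmG : is_metric dG.
Hypothesis HcG : complete_metric dG.
Hypothesis HDG : dense_enum dG DG.
Hypothesis HmX : is_metric dX.
Hypothesis Hact : continuous2 dG dX dX act.

Variables (B : nat -> X -> Prop) (V : nat -> G -> Prop).
Variables (BW : nat -> nat -> X -> Prop) (VW : nat -> nat -> G -> Prop).
Hypothesis HB : forall j, borel dX (B j).
Hypothesis HV : forall j, is_open dG (V j).
Hypothesis HBW : forall k j, borel dX (BW k j).
Hypothesis HVW : forall k j, is_open dG (VW k j).
Hypothesis Hdense : forall k, dense_sections dG (fun x g => exists j, BW k j x /\ VW k j g).
Hypothesis Hstart : forall x, exists g j, B j x /\ V j g.

Definition selector_req (x : X) (k i : nat) : Prop :=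
  match k with
  | 0%nat => exists j, B j x /\ forall y, cball i y -> V j y
  | S k => exists j, BW k j x /\ forall y, cball i y -> VW k j y
  end.

Lemma selector_req_attainable x : attainable dG t0 DG (selector_req x).
Proof.
  apply (attainable_of_open dG t0 DG HmG HDG).
  - destruct (Hstart x) as [g [j [Bj Vg]]].
    exists (V j), g; repeat split; auto; exists j; auto.
  - intros k U u HU Uu.
    destruct (Hdense k x U HU (ex_intro _ u Uu)) as [g [Ug [j [Bj Vg]]]].
    exists (fun y => U y /\ VW k j y), g; repeat split; auto using open_and; try tauto.
    intros i Hi; exists j; split; [exact Bj | intros y Hy; apply Hi, Hy].
Qed.

Lemma borel_selector_req k i : borel dX (fun x => selector_req x k i).
Proof.
  destruct k as [|k]; apply borel_union; intro j; simpl.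
  - apply (borel_ext dX (fun x => (forall y, cball i y -> V j y) /\ B j x));
      [intro x; apply and_comm | apply borel_and; auto using borel_const].
  - apply (borel_ext dX (fun x => (forall y, cball i y -> VW k j y) /\ BW k j x));
      [intro x; apply and_comm | apply borel_and; auto using borel_const].
Qed.

Definition selector (x : X) : G :=
  epsilon (inhabits t0) (fun g => forall k, cball (nested_index dG t0 DG (selector_req x) k) g).

Lemma selector_in_nested_balls x k :
  cball (nested_index dG t0 DG (selector_req x) k) (selector x).
Proof.
  revert k; unfold selector; apply epsilon_spec.
  apply (nested_balls_meet dG t0 DG HmG HcG), selector_req_attainable.
Qed.

Lemma selector_in_rects x :
  (exists j, B j x /\ V j (selector x)) /\
  forall k, exists j, BW k j x /\ VW k j (selector x).
Proof.
  pose proof (nested_index_req dG t0 DG _ (selector_req_attainable x)) as Hreq.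
  split; [| intro k]; [destruct (Hreq 0%nat) as [j [Bj Hj]] | destruct (Hreq (S k)) as [j [Bj Hj]]];
    exists j; split; auto; apply Hj, selector_in_nested_balls.
Qed.

Lemma borel_selector_preimage U :
  is_open dX U -> borel dX (fun x => U (act (selector x) x)).
Proof.
  intros HU.
  apply (borel_ext dX (fun x => exists m k i, nested_index dG t0 DG (selector_req x) k = i /\
    uniformly_inside dX act (cball i) (/ INR (S m)) U x)).
  - intro x; split.
    + intros [m [k [i [<- Hin]]]]; apply (Hin (selector x) (selector_in_nested_balls x k)).
      rewrite (dist_refl dX HmX); apply inv_INR_S_pos.
    + intros HUx.
      destruct (uniformly_inside_near dG dX act HmX Hact U (selector x) x HU HUx)
        as [delta [m [Hdelta Hnear]]].
      destruct (exists_inv_INR_S_lt (delta / 2)) as [k Hk]; [lra |].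
      exists m, k, (nested_index dG t0 DG (selector_req x) k); split; auto.
      apply Hnear; intros h Hh.
      pose proof (closed_ball_dist dG t0 DG HmG _ _ _ (selector_in_nested_balls x k) Hh).
      pose proof (nested_index_radius dG t0 DG _ (selector_req_attainable x) k); lra.
  - do 3 (apply borel_union; intro); apply borel_and.
    + apply (borel_nested_index dG t0 DG dX); auto using selector_req_attainable, borel_selector_req.
    + apply (borel_uniformly_inside dG dX act HmG HmX Hact).
Qed.

End Selector.

Lemma lg_comeager_witness {G X : Type} (dG : G -> G -> R) (dX : X -> X -> R)
    (act : G -> X -> X) (t0 : G) (C : X -> Prop) (O : X -> G -> Prop)
    (W : nat -> X -> G -> Prop) :
  polish_metric dG -> (forall k, rect_open dG dX (W k) /\ dense_sections dG (W k)) ->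
  (forall x g, (forall k, W k x g) -> (C (act g x) <-> O x g)) ->
  lg_comeager dG act C -> forall x, exists g, O x g.
Proof.
  intros HG HW HCO Hlg x.
  destruct (baire_category dG t0 HG (fun g => exists n,
    match n with 0%nat => ~ C (act g x) | S k => ~ W k x g end)) as [g Hg].
  - apply meager_union; intros [|k]; [apply Hlg |].
    apply nowhere_dense_meager, (nowhere_dense_compl_section dG dX); apply HW.
  - exists g; apply HCO.
    + intro k; apply NNPP; intro nW; apply Hg; exists (S k); exact nW.
    + apply NNPP; intro nC; apply Hg; exists 0%nat; exact nC.
Qed.

Theorem borel_selector {G X : Type} (dG : G -> G -> R) (dX : X -> X -> R)
    (act : G -> X -> X) (t0 : G) (C : X -> Prop) :
  polish_metric dG -> is_metric dX -> continuous2 dG dX dX act ->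
  borel dX C -> lg_comeager dG act C ->
  exists s : X -> G, (forall x, C (act (s x) x)) /\
    forall U, is_open dX U -> borel dX (fun x => U (act (s x) x)).
Proof.
  intros HG HmX Hact HC Hlg; pose proof HG as [HmG [HcG [DG HDG]]].
  destruct (uniformly_baire_borel dG dX act t0 DG HmG HmX HDG Hact C HC)
    as [O [[B [V [HB [HV HO]]]] [W [HW HCO]]]].
  destruct (choice (fun k (p : (nat -> X -> Prop) * (nat -> G -> Prop)) =>
    (forall j, borel dX (fst p j)) /\ (forall j, is_open dG (snd p j)) /\
    forall x g, W k x g <-> exists j, fst p j x /\ snd p j g)) as [f Hf].
  { intro k; destruct (proj1 (HW k)) as [BW [VW HBVW]]; exists (BW, VW); exact HBVW. }
  assert (HWf : forall k x g, W k x g <-> exists j, fst (f k) j x /\ snd (f k) j g)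
    by (intro k; apply Hf).
  assert (Hstart : forall x, exists g j, B j x /\ V j g).
  { intro x; destruct (lg_comeager_witness dG dX act t0 C O W HG HW HCO Hlg x) as [g Hg].
    apply HO in Hg; eauto. }
  set (BW := fun k => fst (f k)); set (VW := fun k => snd (f k)).
  assert (HBW : forall k j, borel dX (BW k j)) by (intro k; apply Hf).
  assert (HVW : forall k j, is_open dG (VW k j)) by (intro k; apply Hf).
  assert (Hdense : forall k, dense_sections dG (fun x g => exists j, BW k j x /\ VW k j g)).
  { intros k x U HU HUne; destruct (proj2 (HW k) x U HU HUne) as [g [Ug Wg]].
    exists g; split; [exact Ug | apply HWf, Wg]. }
  exists (selector dG t0 DG B V BW VW); split.
  - intro x; destruct (selector_in_rects dG t0 DG HmG HcG HDG B V BW VW HV HVW Hdense Hstart x)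
      as [HOs HWs].
    apply HCO; [intro k; apply HWf, HWs | apply HO, HOs].
  - exact (borel_selector_preimage dG dX act t0 DG HmG HcG HDG HmX Hact
      B V BW VW HB HV HBW HVW Hdense Hstart).
Qed.

Lemma orbit_rel_act_iff {G X : Type} (mul : G -> G -> G) (inv : G -> G) (e : G)
    (act : G -> X -> X) :
  is_group mul inv e -> (forall x, act e x = x) ->
  (forall g h x, act (mul g h) x = act g (act h x)) ->
  forall a b x y, orbit_rel act (act a x) (act b y) <-> orbit_rel act x y.
Proof.
  intros [_ [_ Hinv]] Hact1 Hact2.
  assert (Hcancel : forall g x, act (inv g) (act g x) = x)
    by (intros g x; rewrite <- Hact2, (proj1 (Hinv g)); apply Hact1).
  intros a b x y; split; intros [h Hh].
  - exists (mul (inv b) (mul h a)); rewrite !Hact2, Hh; apply Hcancel.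
  - exists (mul b (mul h (inv a))); rewrite !Hact2, Hcancel, Hh; reflexivity.
Qed.

Lemma borel_reducible_restriction {G X : Type} (dX : X -> X -> R) (act : G -> X -> X)
    (C : X -> Prop) :
  borel_reducible (sub_borel dX C) (borel dX) (orbit_rel_on act C) (orbit_rel act).
Proof.
  exists (@proj1_sig X C); split; [| reflexivity].
  intros A HA; exists A; split; [exact HA | reflexivity].
Qed.

Lemma borel_reducible_to_restriction {G X : Type} (dX : X -> X -> R)
    (mul : G -> G -> G) (inv : G -> G) (e : G) (act : G -> X -> X)
    (C : X -> Prop) (s : X -> G) :
  is_group mul inv e -> (forall x, act e x = x) ->
  (forall g h x, act (mul g h) x = act g (act h x)) ->
  forall (HsC : forall x, C (act (s x) x)),
  (forall U, is_open dX U -> borel dX (fun x => U (act (s x) x))) ->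
  borel_reducible (borel dX) (sub_borel dX C) (orbit_rel act) (orbit_rel_on act C).
Proof.
  intros Hgroup Hact1 Hact2 HsC Hs.
  exists (fun x => exist C (act (s x) x) (HsC x)); split.
  - intros A [A' [HA' HAA']].
    apply (borel_ext dX (fun x => A' (act (s x) x))); [intro x; symmetry; apply HAA' |].
    exact (borel_preimage dX dX _ Hs A' HA').
  - intros x y; symmetry; apply (orbit_rel_act_iff mul inv e act Hgroup Hact1 Hact2).
Qed.

Theorem mainTheorem7 (G : Type) (dG : G -> G -> R) (mul : G -> G -> G)
  (inv : G -> G) (e : G) (X : Type) (dX : X -> X -> R) (act : G -> X -> X)
  (C : X -> Prop) :
  polish_group dG mul inv e ->
  polish_metric dX ->
  continuous_action dG mul e dX act ->
  borel dX C ->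
  lg_comeager dG act C ->
  borel_bireducible (sub_borel dX C) (borel dX) (orbit_rel_on act C) (orbit_rel act).
Proof.
  intros [HG [Hgroup _]] [HmX _] [Hact1 [Hact2 Hact]] HC Hlg.
  destruct (borel_selector dG dX act e C HG HmX Hact HC Hlg) as [s [HsC Hs]].
  split.
  - apply borel_reducible_restriction.
  - exact (borel_reducible_to_restriction dX mul inv e act C s Hgroup Hact1 Hact2 HsC Hs).
Qed.
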